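(* If every ample class is dismantlable, then for every $n$ the cross-polytope $O_n$ is extendably shellable.
   Context: For a finite set $X$, a concept class is $C\subseteq 2^X$; $Y\subseteq X$ is shattered by $C$ if $\{c\cap Y:c\in C\}=2^Y$. A cube of $2^X$ is $\{T\cup Z:Z\subseteq Y\}$ with $Y\subseteq X$, $T\subseteq X\setminus Y$ ($Y$ its support); $C$ is ample if every set shattered by $C$ is the support of a cube contained in $C$. $C$ is dismantlable if it admits an ordering $c_1,\dots,c_m$ of all its concepts such that every level set $\{c_1,\dots,c_i\}$ is ample. With $\pm X=\{\pm x_1,\dots,\pm x_n\}$, the cross-polytope $O_n$ is the simplicial complex whose facets are the sets $\sigma\subseteq\pm X$ containing exactly one of $+x_i,-x_i$ for each $i$. A partial shelling is a sequence $\sigma_1,\dots,\sigma_m$ of distinct facets such that for each $2\le j\le m$ the family $2^{\sigma_j}\cap\bigcup_{i<j}2^{\sigma_i}$ is a pure complex whose maximal sets all have size $n-1$; a shelling is a partial shelling containing all facets. $O_n$ is extendably shellable if every partial shelling can be extended to a shelling. *)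

From mathcomp Require Import all_boot.
Set Implicit Arguments. Unset Strict Implicit. Unset Printing Implicit Defensive.

Section Ample.
Variable X : finType.

Definition shatters (C : {set {set X}}) (Y : {set X}) : bool :=
  [set c :&: Y | c in C] == powerset Y.

Definition cube (Y T0 : {set X}) : {set {set X}} :=
  [set T0 :|: Z | Z in powerset Y].

Definition ample (C : {set {set X}}) : Prop :=
  forall Y : {set X}, shatters C Y ->
    exists T0 : {set X}, T0 \subset ~: Y /\ cube Y T0 \subset C.

Definition dismantlable (C : {set {set X}}) : Prop :=
  exists s : seq {set X},
    [/\ uniq s, (forall c, (c \in s) = (c \in C)) &
        forall i, 0 < i <= size s -> ample [set c in take i s]].
End Ample.

Section CrossPolytope.
Variable n : nat.
(* vertex (i, true) = +x_i, (i, false) = -x_i *)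
Local Notation pmX := ('I_n * bool)%type.

Definition cp_facet (sigma : {set pmX}) : bool :=
  [forall i : 'I_n, ((i, true) \in sigma) != ((i, false) \in sigma)].

Definition inter_family (prev : seq {set pmX}) (sj : {set pmX}) : {set {set pmX}} :=
  [set tau : {set pmX} | (tau \subset sj) && has (fun si : {set pmX} => tau \subset si) prev].

Definition pure_codim1 (F : {set {set pmX}}) : Prop :=
  forall tau, maxset (fun B => B \in F) tau -> #|tau| = n.-1.

Definition partial_shelling (s : seq {set pmX}) : Prop :=
  [/\ all cp_facet s, uniq s &
      forall j, 0 < j < size s ->
        pure_codim1 (inter_family (take j s) (nth set0 s j))].

Definition shelling (s : seq {set pmX}) : Prop :=
  partial_shelling s /\ forall sigma, cp_facet sigma -> sigma \in s.

Definition extendably_shellable : Prop :=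
  forall s, partial_shelling s -> exists t, shelling (s ++ t).
End CrossPolytope.

(* A facet of O_n is determined by the set c of indices i with +x_i in it, and two
   facets meet in a face of size n-1 iff their sets differ in one element. So a
   sequence of facets is a partial shelling iff every new set c has, towards each
   earlier set p, a neighbour c + {x} with x in c + p (symmetric difference) among
   the earlier sets. For an ample class C not containing c this is exactly the
   condition for C u {c} to be ample; hence partial shellings are the orderings
   all of whose prefixes are ample. The complement of an ample class is ample, so
   by hypothesis it has a dismantling order; appending that order reversed makes
   every further prefix the complement of a level set of the dismantling, hence
   ample, and the result is a shelling. *)

From mathcomp Require Import all_boot zify.
Set Implicit Arguments. Unset Strict Implicit. Unset Printing Implicit Defensive.

Lemma nth_notin_take (T : eqType) (x0 : T) (s : seq T) i :
  uniq s -> i < size s -> nth x0 s i \notin take i s.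
Proof. by move=> us ltis; rewrite in_take ?mem_nth // index_uniq // ltnn. Qed.

Section Ample.
Variable X : finType.
Implicit Types (C D : {set {set X}}) (B T U V W Y Z c p q r : {set X}).

Lemma shattersE C Y : shatters C Y = (powerset Y \subset [set c :&: Y | c in C]).
Proof.
rewrite /shatters eqEsubset andb_idl //= => _.
by apply/subsetP=> _ /imsetP[c _ ->]; rewrite powersetE subsetIr.
Qed.

Lemma shattersP C Y :
  reflect (forall B, B \subset Y -> exists2 c, c \in C & c :&: Y = B) (shatters C Y).
Proof.
rewrite shattersE; apply: (iffP subsetP) => [sh B BY | sh B].
  have /sh/imsetP[c cC ->] : B \in powerset Y by rewrite powersetE.
  by exists c.
by rewrite powersetE => /sh[c cC <-]; apply: imset_f.
Qed.

Lemma shattersPn C Y :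
  reflect (exists2 B : {set X}, B \subset Y & forall c, c \in C -> c :&: Y != B) (~~ shatters C Y).
Proof.
rewrite shattersE; apply: (iffP subsetPn) => [[B] | [B BY nB]].
  rewrite powersetE => BY nB; exists B => // c cC.
  by apply: contraNneq nB => <-; apply: imset_f.
by exists B; rewrite ?powersetE //; apply/imsetP=> -[c cC /esym/eqP]; apply/negP/nB.
Qed.

Lemma shattersS C D Y : C \subset D -> shatters C Y -> shatters D Y.
Proof.
move=> CD /shattersP sh; apply/shattersP => B /sh[c cC <-].
by exists c; first exact: subsetP cC.
Qed.

Lemma cube_subsetP C Y T :
  reflect (forall Z, Z \subset Y -> T :|: Z \in C) (cube Y T \subset C).
Proof.
apply: (iffP subsetP) => [cubeC Z ZY | cubeC e /imsetP[Z]].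
  by apply: cubeC; apply/imsetP; exists Z; rewrite ?powersetE.
by rewrite powersetE => ZY ->; apply: cubeC.
Qed.

Definition strongly_shatters C Y := exists T, T \subset ~: Y /\ cube Y T \subset C.

Lemma strongly_shattersCE C Y : strongly_shatters C Y <-> ~~ shatters (~: C) (~: Y).
Proof.
split=> [[T [TY /cube_subsetP cubeC]] | /shattersPn[T TY nT]].
  apply/shattersP => /(_ T TY)[e]; rewrite inE => /negP eNC eT; apply: eNC.
  by rewrite -(setID e (~: Y)) eT setDE setCK; apply/cubeC/subsetIr.
exists T; split=> //; apply/cube_subsetP => Z ZY.
have := nT (T :|: Z); rewrite inE => /contraR; apply.
rewrite setIUl (setIidPl TY) -setDE.
by move: ZY; rewrite -setD_eq0 => /eqP ->; rewrite setU0 negbK.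
Qed.

Lemma ampleC C : ample C -> ample (~: C).
Proof.
move=> ampC Y shY; apply/(strongly_shattersCE (~: C) Y); rewrite setCK.
apply: contraL shY => /ampC/strongly_shattersCE; by rewrite setCK.
Qed.

Lemma ample0 : ample (set0 : {set {set X}}).
Proof. by move=> Y /shattersP/(_ set0 (sub0set Y))[c]; rewrite inE. Qed.

Lemma ample_take0 (s : seq {set X}) : ample [set c in take 0 s].
Proof.
by rewrite (_ : [set c in take 0 s] = set0); [apply: ample0 | apply/setP => c; rewrite take0 !inE].
Qed.

Definition symdiff c q : {set X} := [set y | (y \in c) != (y \in q)].

Lemma symdiffC c q : symdiff c q = symdiff q c.
Proof. by apply/setP => y; rewrite !inE eq_sym. Qed.

Lemma symdiffK c : involutive (symdiff c).
Proof. by move=> q; apply/setP => y; rewrite !inE; case: (y \in c); case: (y \in q). Qed.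

Lemma symdiff_eq0 c q : (symdiff c q == set0) = (c == q).
Proof.
apply/eqP/eqP => [/setP c_q | <-]; last by apply/setP => y; rewrite !inE eqxx.
by apply/setP => y; have := c_q y; rewrite !inE => /negbFE/eqP.
Qed.

Lemma symdiff0 c : symdiff c set0 = c.
Proof. by apply/setP => y; rewrite !inE; case: (y \in c). Qed.

Lemma shatters_setU1_fix C x b Y T :
  shatters [set r in C | (x \in r) == b] Y -> T \subset ~: Y -> cube Y T \subset C ->
  (x \in T) != b -> shatters C (x |: Y).
Proof.
move=> /shattersP shb /subsetP TY /cube_subsetP cubeT xTb; apply/shattersP => B BxY.
have BY : B :\ x \subset Y.
  by apply/subsetP => y; rewrite inE => /andP[yx /(subsetP BxY)]; rewrite inE (negbTE yx).
have inB y : y != x -> (y \in B) = (y \in B) && (y \in Y).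
  by move=> yx; apply/idP/andP => [yB | []//]; have := subsetP BxY y yB; rewrite !inE (negbTE yx).
have [xB | xBN] := eqVneq (x \in B) b.
  have [r] := shb _ BY; rewrite inE => /andP[rC /eqP xr] /setP rY.
  exists r => //; apply/setP => y; rewrite !inE.
  have [->|yx] := eqVneq y x; first by rewrite xr xB andbT.
  by have := rY y; rewrite !inE yx /= => ->.
exists (T :|: B :\ x); first exact: cubeT.
apply/setP => y; rewrite !inE.
have [->|yx] := eqVneq y x.
  by move: xTb xBN; rewrite /= orbF andbT; do 2!case: (_ \in _); case: (b).
rewrite /= [RHS]inB // andb_orl; case yT: (y \in T) => //=.
by have := TY y yT; rewrite inE => /negbTE ->.
Qed.

Lemma ample_fix C x b : ample C -> ample [set r in C | (x \in r) == b].
Proof.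
move=> ampC Y shY.
have xNY : x \notin Y.
  apply/negP => xY; have [|r] := shattersP _ _ shY [set y | (y == x) && ~~ b].
    by apply/subsetP => y; rewrite inE => /andP[/eqP-> _].
  by rewrite inE => /andP[_ /eqP xr] /setP/(_ x); rewrite !inE xY eqxx xr; case: (b).
have notin_cube Z : Z \subset Y -> x \notin Z.
  by move=> ZY; apply: contra xNY; apply: subsetP.
have [T [TY cubeT]] : strongly_shatters C Y.
  by apply/ampC/(shattersS _ shY); rewrite setIdE subsetIl.
have [xTb | xTNb] := eqVneq (x \in T) b.
  exists T; split=> //; apply/cube_subsetP => Z ZY.
  by rewrite inE (cube_subsetP _ _ _ cubeT) //= inE (negbTE (notin_cube _ ZY)) orbF xTb.
have [T1 [T1xY cubeT1]] := ampC _ (shatters_setU1_fix shY TY cubeT xTNb).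
have xNT1 : x \notin T1 by apply/negP => /(subsetP T1xY); rewrite !inE eqxx.
exists (T1 :|: [set y | (y == x) && b]); split.
  apply/subsetP => y; rewrite !inE => /orP[/(subsetP T1xY) | /andP[/eqP-> _]] //.
  by rewrite !inE negb_or => /andP[].
apply/cube_subsetP => Z ZY; rewrite inE -setUA; apply/andP; split.
  apply: (cube_subsetP _ _ _ cubeT1); apply/subsetP => y; rewrite !inE.
  by case/orP=> [/andP[-> //] | /(subsetP ZY) ->]; rewrite orbT.
by rewrite !inE (negbTE xNT1) (negbTE (notin_cube _ ZY)) eqxx /= orbF.
Qed.

Lemma ample_subcube C c V : ample C -> ample [set r in C | symdiff c r \subset V].
Proof.
move=> ampC; pose agree r := [pred y | (y \in r) == (y \in c)].
have ample_agree (s : seq X) : ample [set r in C | all (agree r) s].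
  elim: s => [|y s IHs].
    by rewrite (_ : [set r in C | _] = C) //; apply/setP => r; rewrite !inE andbT.
  rewrite (_ : [set r in C | _] = [set r in [set r in C | all (agree r) s] | agree r y]).
    exact: ample_fix IHs.
  by apply/setP => r; rewrite !inE /= andbA andbAC.
rewrite (_ : [set r in C | _] = [set r in C | all (agree r) (enum (~: V))]) //.
apply/setP => r; rewrite !inE.
congr (_ && _); apply/subsetP/allP => [sub y | agrees y]; rewrite ?mem_enum !inE.
  by apply: contraNT => ry; apply: sub; rewrite inE eq_sym.
by apply: contraR => yV; rewrite eq_sym; apply: agrees; rewrite mem_enum inE.
Qed.

Lemma shatters1 C c q x : c \in C -> q \in C -> x \in symdiff c q -> shatters C [set x].
Proof.
rewrite inE => cC qC xcq; apply/shattersP => B Bx.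
exists (if (x \in B) == (x \in c) then c else q); first by case: ifP.
apply/setP => y; rewrite !inE; have [->|yx] := eqVneq y x.
  by rewrite andbT; case: ifP => [/eqP //|]; move: xcq; do 3!case: (_ \in _).
by rewrite andbF; apply/esym/negbTE; apply: contra yx => /(subsetP Bx); rewrite inE.
Qed.

Lemma symdiff_setU1 T x : x \notin T -> symdiff T (x |: T) = [set x].
Proof.
move=> xT; apply/setP => y; rewrite !inE.
by have [->|] := eqVneq y x; [rewrite (negbTE xT) | case: (y \in T)].
Qed.

Lemma ample_flip_towards C c q : ample C -> c \in C -> q \in C -> c != q ->
  exists2 x, x \in symdiff c q & symdiff c [set x] \in C.
Proof.
move=> ampC cC qC cq.
(* Take r in C closest to c between c and q: the subcube through c spanned by
   c + r meets C in {c, r} only, and ampleness forces c + r to be a singleton. *)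
pose P r := [&& r \in C, r != c & symdiff c r \subset symdiff c q].
have Pq : P q by rewrite /P qC eq_sym cq subxx.
case: (arg_minnP (fun r => #|symdiff c r|) Pq) => r /and3P[rC rc rcq] r_min.
have [x xcr] : exists x, x \in symdiff c r by apply/set0Pn; rewrite symdiff_eq0 eq_sym.
exists x; first exact: subsetP rcq x xcr.
pose D := [set r' in C | symdiff c r' \subset symdiff c r].
have D_cr r' : r' \in D -> r' = c \/ r' = r.
  rewrite inE => /andP[r'C r'cr]; have [->|r'c] := eqVneq r' c; [by left | right].
  have := r_min r'; rewrite /P r'C r'c (subset_trans r'cr rcq) => /(_ isT) le_r'.
  by apply: (can_inj (symdiffK c)); apply/eqP; rewrite eqEcard r'cr.
have shD : shatters D [set x].
  apply: (shatters1 _ _ xcr); rewrite inE ?cC ?rC //=.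
  by apply/subsetP => y; rewrite inE eqxx.
have [T [Tx /cube_subsetP cubeT]] : strongly_shatters D [set x] by apply: ample_subcube.
have xNT : x \notin T by apply/negP => /(subsetP Tx); rewrite !inE eqxx.
have neq : x |: T != T by apply: contraNneq xNT => <-; rewrite setU11.
have TD : T \in D by rewrite -[T]setU0; apply/cubeT/sub0set.
have xTD : x |: T \in D by rewrite setUC; apply: cubeT.
suff <- : symdiff c r = [set x] by rewrite symdiffK.
have [eT|eT] := D_cr _ TD; have [exT|exT] := D_cr _ xTD.
- by rewrite exT eT eqxx in neq.
- by rewrite -eT -exT symdiff_setU1.
- by rewrite -eT -exT symdiffC symdiff_setU1.
- by rewrite exT eT eqxx in neq.
Qed.

Definition neighbors_toward C c :=
  forall p, p \in C -> exists2 x, x \in symdiff c p & symdiff c [set x] \in C.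

Lemma ample_setU1_neighbors C c : c \notin C -> ample (c |: C) -> neighbors_toward C c.
Proof.
move=> cNC ampCc p pC; have cp : c != p by apply: contraNneq cNC => ->.
have [x xcp] := ample_flip_towards ampCc (setU11 c C) (setU1r c pC) cp.
case/setU1P => [/setP/(_ x) | xC]; last by exists x.
by rewrite !inE eqxx; case: (x \in c).
Qed.

Lemma shatters_setU1_trace C c p Y :
  shatters (c |: C) Y -> p \in C -> p :&: Y = c :&: Y -> shatters C Y.
Proof.
move=> /shattersP shY pC pY; apply/shattersP => B /shY[r /setU1P[-> <-| rC rY]].
  by exists p.
by exists r.
Qed.

Lemma shatters_setU1_flip C c Y y :
  neighbors_toward C c -> shatters (c |: C) Y -> ~~ shatters C Y -> y \in Y ->
  symdiff c [set y] \in C.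
Proof.
move=> nbC shY nshY yY.
have [p] := shattersP _ _ shY (symdiff c [set y] :&: Y) (subsetIr _ _).
case/setU1P => [-> /setP/(_ y) | pC pY]; first by rewrite !inE yY eqxx andbT; case: (y \in c).
have [x xcp xC] := nbC p pC.
have [xY | xNY] := boolP (x \in Y).
  suff /eqP <- : x == y by [].
  move/setP/(_ x): pY; move: xcp; rewrite !inE xY !andbT => xcp xp; move: xcp; rewrite xp.
  by case: (x \in c); case: (x == y).
case/negP: nshY; apply: (shatters_setU1_trace shY xC); apply/setP => z; rewrite !inE.
by have [->|_] := eqVneq z x; [rewrite (negbTE xNY) !andbF | case: (z \in c)].
Qed.

Lemma shatters_punctured_subcube C c W z : z \in W -> 1 < #|W| ->
  (forall U, U \proper W -> U != set0 -> symdiff c U \in C) ->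
  shatters [set r in C | symdiff c r \subset W] (W :\ z).
Proof.
move=> zW W_gt1 properC; apply/shattersP => B BWz.
(* Flip c on the coordinates where B differs from it; flip at z only when that
   is needed to keep the set of flips nonempty. *)
pose U0 := symdiff c B :&: (W :\ z).
pose U := if U0 == set0 then [set z] else U0.
have UW : U \proper W.
  rewrite /U; case: ifP => _; last exact: sub_proper_trans (subsetIr _ _) (properD1 zW).
  by rewrite properEcard sub1set zW cards1.
have U_trace : U :&: (W :\ z) = U0.
  rewrite /U; case: ifP => [/eqP-> | _]; last by rewrite -setIA setIid.
  by apply/setP => y; rewrite !inE; case: eqP.
exists (symdiff c U).
  rewrite inE symdiffK (proper_sub UW) andbT; apply: properC => //.
  by rewrite /U; case: ifP => [_ | /negbT //]; apply/set0Pn; exists z; rewrite inE.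
apply/setP => y; rewrite inE; have [yWz | yNWz] := boolP (y \in W :\ z); last first.
  by rewrite andbF; apply/esym/negbTE; apply: contra yNWz; apply: subsetP.
move/setP/(_ y): U_trace; rewrite !in_setI yWz !andbT !inE => ->.
by case: (y \in c); case: (y \in B).
Qed.

Lemma ample_flips C c V : ample C -> c \notin C ->
  (forall y, y \in V -> symdiff c [set y] \in C) ->
  forall W, W \subset V -> W != set0 -> symdiff c W \in C.
Proof.
move=> ampC cNC flipV W; have [k] := ubnP #|W|; elim: k W => // k IHk W ltWk WV W0.
have [z zW] := set0Pn _ W0.
have [W_le1 | W_gt1] := leqP #|W| 1.
  suff -> : W = [set z] by apply/flipV/(subsetP WV).
  by apply/eqP; rewrite eq_sym eqEcard sub1set zW cards1.
apply: contraT => WNC.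
(* For a minimal counterexample W, the subcube through c spanned by W meets C in
   a class shattering W :\ z, and the cube it contains has c or c + W as corner. *)
have properC U : U \proper W -> U != set0 -> symdiff c U \in C.
  move=> UW; apply: IHk; last exact: subset_trans (proper_sub UW) WV.
  exact: leq_trans (proper_card UW) _.
have [T [TWz /cube_subsetP cubeT]] :
    strongly_shatters [set r in C | symdiff c r \subset W] (W :\ z).
  exact/ample_subcube/shatters_punctured_subcube.
pose b := (z \in T) != (z \in c).
pose e := T :|: [set y in W :\ z | (y \in c) != b].
have /setIdP[eC ecW] : e \in [set r in C | symdiff c r \subset W].
  by apply: cubeT; rewrite setIdE subsetIl.
have sym_e : symdiff c e = if b then W else set0.
  apply/setP => y; have [yW | yNW] := boolP (y \in W); last first.
    rewrite (negbTE (contra (subsetP ecW y) yNW)); by case: ifP; rewrite ?inE ?(negbTE yNW).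
  have -> : (y \in if b then W else set0) = b by case: (b); rewrite ?inE.
  have [->|yz] := eqVneq y z; first by rewrite !inE eqxx /= orbF eq_sym.
  have yNT : y \notin T by apply/negP => /(subsetP TWz); rewrite !inE yz yW.
  by rewrite !inE (negbTE yNT) yz yW /=; case: (y \in c); case: (b).
move: eC; rewrite -(symdiffK c e) sym_e.
by case: ifP => _; [rewrite (negbTE WNC) | rewrite symdiff0 (negbTE cNC)].
Qed.

Lemma ample_setU1 C c : ample C -> c \notin C -> neighbors_toward C c -> ample (c |: C).
Proof.
move=> ampC cNC nbC Y shY.
have [shCY | nshCY] := boolP (shatters C Y).
  have [T [TY cubeT]] := ampC _ shCY.
  by exists T; split=> //; apply: subset_trans cubeT (subsetUr _ _).
have flipY y : y \in Y -> symdiff c [set y] \in C.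
  exact: shatters_setU1_flip nbC shY nshCY.
exists (c :\: Y); split; first by rewrite setDE subsetIr.
apply/cube_subsetP => Z ZY; rewrite -(symdiffK c (_ :|: Z)).
have [->|U0] := eqVneq (symdiff c (c :\: Y :|: Z)) set0; first by rewrite symdiff0 setU11.
apply/setU1r/(ample_flips ampC cNC flipY) => //; apply/subsetP => y.
apply: contraLR => yNY; rewrite !inE yNY (negbTE (contra (subsetP ZY y) yNY)) orbF.
by rewrite eqxx.
Qed.

Lemma set_take_nth (s : seq {set X}) i : i < size s ->
  [set c in take i.+1 s] = nth set0 s i |: [set c in take i s].
Proof.
by move=> ltis; rewrite (take_nth set0 ltis); apply/setP => c; rewrite !inE mem_rcons in_cons.
Qed.

Lemma ample_prefixesP (s : seq {set X}) : uniq s ->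
  (forall i, ample [set c in take i s]) <->
  (forall j, j < size s -> neighbors_toward [set c in take j s] (nth set0 s j)).
Proof.
move=> us; split=> [amp j ltjs | nb].
  apply: ample_setU1_neighbors; first by rewrite inE nth_notin_take.
  by rewrite -set_take_nth.
elim=> [|i IHi]; first exact: ample_take0.
have [ltis | leis] := ltnP i (size s).
  by rewrite set_take_nth //; apply: ample_setU1 => //; [rewrite inE nth_notin_take | exact: nb].
by rewrite take_oversize ?(leq_trans leis) // -(take_oversize leis).
Qed.

Lemma ample_ordering_completion (s : seq {set X}) : uniq s ->
  (forall i, ample [set c in take i s]) -> dismantlable (~: [set c in s]) ->
  exists u, [/\ uniq (s ++ u), forall c, c \in s ++ u &
                forall i, ample [set c in take i (s ++ u)]].
Proof.
move=> us amp_s [d [ud d_compl amp_d]].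
have dE c : (c \in d) = (c \notin s) by rewrite d_compl !inE.
exists (rev d); split.
- by rewrite cat_uniq us rev_uniq ud andbT /=; apply/hasPn => c; rewrite mem_rev dE.
- by move=> c; rewrite mem_cat mem_rev dE orbN.
move=> i; rewrite take_cat; case: ltnP => [_ | _]; first exact: amp_s.
rewrite take_rev; set m := size d - _.
have -> : [set c in s ++ rev (drop m d)] = ~: [set c in take m d].
  apply/setP => c; rewrite !inE mem_cat mem_rev.
  move: ud (dE c); rewrite -{1 2}(cat_take_drop m d) cat_uniq mem_cat.
  case/and3P => _ /hasPn/(_ c) disj _.
  by move: disj; case: (c \in s); case: (c \in take m d); case: (c \in drop m d) => //= /(_ isT).
apply: ampleC; have [-> | m_gt0] := posnP m; first exact: ample_take0.
by apply: amp_d; rewrite m_gt0 leq_subr.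
Qed.
End Ample.

Section CrossPolytope.
Variable n : nat.
Local Notation pmX := ('I_n * bool)%type.
Implicit Types (c p r : {set 'I_n}) (sigma tau : {set pmX}).

Definition facet c : {set pmX} := [set v | v.2 == (v.1 \in c)].
Definition concept sigma : {set 'I_n} := [set i | (i, true) \in sigma].

Lemma facet_cp c : cp_facet (facet c).
Proof. by apply/forallP => i; rewrite !inE /=; case: (i \in c). Qed.

Lemma facetK : cancel facet concept.
Proof. by move=> c; apply/setP => i; rewrite !inE /=; case: (i \in c). Qed.

Lemma conceptK sigma : cp_facet sigma -> facet (concept sigma) = sigma.
Proof.
move=> /forallP cp_sigma; apply/setP => -[i b]; rewrite !inE /=; have := cp_sigma i.
by case: b; case: ((i, true) \in sigma); case: ((i, false) \in sigma).
Qed.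

Lemma card_facetI c r : #|facet c :&: facet r| = n - #|symdiff c r|.
Proof.
have -> : facet c :&: facet r = [set (i, i \in c) | i in ~: symdiff c r].
  apply/setP => -[i b]; rewrite !inE /=; apply/andP/imsetP => [[/eqP-> /eqP cr] | [j]].
    by exists i; rewrite // !inE cr eqxx.
  by rewrite !inE negbK => /eqP cr [-> ->]; rewrite /= cr !eqxx.
rewrite card_imset => [|i j [] //].
by rewrite -[n in n - _]card_ord -(cardsC (symdiff c r)) addKn.
Qed.

Lemma facetI_subset c p r :
  (facet c :&: facet p \subset facet r) = (symdiff c r \subset symdiff c p).
Proof.
apply/subsetP/subsetP => [sub i | sub [i b]]; rewrite !inE.
  apply: contraLR; rewrite !negbK => /eqP cp.
  by have := sub (i, i \in c); rewrite !inE /= eqxx -cp eqxx eq_sym => /(_ isT).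
case/andP => /= /eqP -> /eqP cp; have := sub i; rewrite !inE cp eqxx.
by case: (i \in p); case: (i \in r) => // /(_ isT).
Qed.

Lemma facetI_in_family (t : seq {set 'I_n}) c r :
  r \in t -> facet c :&: facet r \in inter_family (map facet t) (facet c).
Proof.
move=> rt; rewrite inE subsetIl; apply/hasP.
by exists (facet r); [apply: map_f | apply: subsetIr].
Qed.

Lemma pure_codim1_neighbors (t : seq {set 'I_n}) c : c \notin t ->
  pure_codim1 (inter_family (map facet t) (facet c)) <-> neighbors_toward [set r in t] c.
Proof.
move=> cNt; set F := inter_family _ _.
have in_F tau : tau \in F -> exists2 r, r \in t & tau \subset facet c :&: facet r.
  by rewrite inE => /andP[tc /hasP[_ /mapP[r rt ->] tr]]; exists r; rewrite // subsetI tc.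
have max_F tau r : maxset (fun B => B \in F) tau -> r \in t -> tau \subset facet c :&: facet r ->
    tau = facet c :&: facet r.
  by move=> /maxsetP[_ tmax] rt taucr; apply/esym/tmax => //; apply: facetI_in_family.
split=> [pure p | nb tau tmax].
  rewrite inE => pt; have [tau tmax ctau] := maxset_exists (facetI_in_family c pt).
  have [r rt tcr] := in_F tau (proj1 (maxsetP tmax)).
  have tauE := max_F _ _ tmax rt tcr.
  have /cards1P[x rE] : #|symdiff c r| == 1.
    have le_n : #|symdiff c r| <= n by rewrite -[n in _ <= n]card_ord max_card.
    have : 0 < #|symdiff c r| by rewrite card_gt0 symdiff_eq0; apply: contraNneq cNt => ->.
    by move: (pure _ tmax); rewrite tauE card_facetI; lia.
  exists x; last by rewrite -rE symdiffK inE.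
  by rewrite -sub1set -rE -facetI_subset (subset_trans ctau) // (subset_trans tcr) ?subsetIr.
have [p pt tcp] := in_F tau (proj1 (maxsetP tmax)).
have /nb[x xcp] : p \in [set r in t] by rewrite inE.
rewrite inE => xt.
rewrite (max_F _ _ tmax xt); first by rewrite card_facetI symdiffK cards1 subn1.
by rewrite (subset_trans tcp) // subsetI subsetIl facetI_subset symdiffK sub1set.
Qed.

Lemma partial_shelling_facets (t : seq {set 'I_n}) :
  partial_shelling (map facet t) <-> uniq t /\ forall i, ample [set c in take i t].
Proof.
rewrite /partial_shelling size_map (map_inj_uniq (can_inj facetK)).
have all_facets : all (@cp_facet n) (map facet t).
  by apply/allP => _ /mapP[c _ ->]; apply: facet_cp.
have step j : uniq t -> j < size t ->
    pure_codim1 (inter_family (take j (map facet t)) (nth set0 (map facet t) j)) <->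
    neighbors_toward [set c in take j t] (nth set0 t j).
  move=> ut ltjt; rewrite -map_take (nth_map set0) //.
  exact/pure_codim1_neighbors/nth_notin_take.
split=> [[_ ut pure] | [ut amp]]; split=> //.
  apply/ample_prefixesP => // -[_ p | j ltjt]; first by rewrite take0 inE.
  by apply/step/pure.
move=> j /andP[_ ltjt]; apply/step => //.
exact: (ample_prefixesP ut).1 amp j ltjt.
Qed.
End CrossPolytope.

Theorem corollary4p4 :
  (forall (X : finType) (C : {set {set X}}), ample C -> dismantlable C) ->
  forall n : nat, extendably_shellable n.
Proof.
move=> dismantle n s shell_s.
have s_facets : s = map (@facet n) (map (@concept n) s).
  by case: shell_s => /allP s_cp _ _; rewrite -map_comp map_id_in // => sigma /s_cp/conceptK.
move: shell_s; rewrite s_facets; set t := map _ s.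
case/partial_shelling_facets => ut amp_t.
have [|u [utu t_u amp_tu]] := ample_ordering_completion ut amp_t.
  by apply/dismantle/ampleC; rewrite -(take_size t).
exists (map (@facet n) u); rewrite -map_cat; split; first exact/partial_shelling_facets.
by move=> sigma /conceptK <-; apply: map_f.
Qed.
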